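(* For $i,k\in\{1,2,3\}$ with $i\neq k$ and $l\in\{1,2\}$ let $h_{i,k}^{(l)}\in\mathbb{C}\setminus\{0\}$ and let $\mathbf{H}_{i,k}=\mathrm{diag}\big(h_{i,k}^{(1)},h_{i,k}^{(2)}\big)$. Suppose $$\frac{h_{1,2}^{(2)}}{h_{1,2}^{(1)}}\frac{h_{1,3}^{(1)}}{h_{1,3}^{(2)}}\frac{h_{2,3}^{(2)}}{h_{2,3}^{(1)}}\frac{h_{2,1}^{(1)}}{h_{2,1}^{(2)}}\frac{h_{3,1}^{(2)}}{h_{3,1}^{(1)}}\frac{h_{3,2}^{(1)}}{h_{3,2}^{(2)}}=1.$$ Then interference alignment is feasible: there exist vectors $\mathbf{u}_1,\mathbf{u}_2,\mathbf{u}_3,\mathbf{v}_1,\mathbf{v}_2,\mathbf{v}_3\in\mathbb{C}^2$, all of whose entries are nonzero, such that $\mathbf{u}_i^{\dagger}\mathbf{H}_{i,k}\mathbf{v}_k=0$ for all $i\neq k$ in $\{1,2,3\}$.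
   Context: Setting: three transmitter–receiver pairs, each node with a single antenna, all using the same two orthogonal subcarriers, each transmitter sending one stream (three streams over two subcarriers in total). $h_{i,k}^{(l)}$ is the channel coefficient on subcarrier $l$ from transmitter $k$ to receiver $i$ (cross channels for $i\ne k$), $\mathbf{v}_k$ is the precoding vector of transmitter $k$, $\mathbf{u}_i$ the receive filter of receiver $i$, and $\mathbf{u}^\dagger$ denotes conjugate transpose. Interference alignment means the interference from every other transmitter is nulled by each receive filter, i.e. $\mathbf{u}_i^{\dagger}\mathbf{H}_{i,k}\mathbf{v}_k=0$ for $i\neq k$. *)

From HB Require Import structures.
From mathcomp Require Import all_boot all_order all_algebra.
From mathcomp Require Import complex.
From mathcomp Require Import reals.
Set Implicit Arguments. Unset Strict Implicit. Unset Printing Implicit Defensive.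
Import Order.TTheory GRing.Theory Num.Theory.
Local Open Scope ring_scope.

(* Users 1,2,3 are the ordinals 0,1,2 of 'I_3; subcarriers 1,2 are 0,1 of 'I_2. *)
Definition u1 : 'I_3 := @Ordinal 3 0 isT.
Definition u2 : 'I_3 := @Ordinal 3 1 isT.
Definition u3 : 'I_3 := @Ordinal 3 2 isT.
Definition sc1 : 'I_2 := @Ordinal 2 0 isT.
Definition sc2 : 'I_2 := @Ordinal 2 1 isT.

Definition chanmx (C : ringType) (h : 'I_3 -> 'I_3 -> 'I_2 -> C) (i k : 'I_3)
  : 'M[C]_2 := diag_mx (\row_l h i k l).

Definition adjmx (C : numClosedFieldType) m n (A : 'M[C]_(m, n)) : 'M[C]_(n, m) :=
  map_mx Num.conj A^T.

From mathcomp Require Import all_boot all_order all_algebra.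
From mathcomp Require Import complex.
From mathcomp Require Import reals.
From mathcomp Require Import ring.
Import GRing.Theory Num.Theory.
Local Open Scope ring_scope.
Local Open Scope complex_scope.

(* With u_i = (1, conj x_i) and v_k = (1, y_k), the interference term
   u_i^† H_{i,k} v_k is h_{i,k}^(1) + x_i y_k h_{i,k}^(2), so alignment asks
   for a rank-one factorization x_i y_k = r_{i,k} := - h_{i,k}^(1) / h_{i,k}^(2)
   of the off-diagonal entries of a 3x3 matrix.  Such a factorization with
   nonzero factors exists when the two 3-cycles of entries have equal
   products, r_12 r_23 r_31 = r_13 r_32 r_21, and this is the hypothesis
   (the six signs cancel). *)

Lemma ord3_cases (i : 'I_3) : [\/ i = u1, i = u2 | i = u3].
Proof.
by case: i => [[|[|[|//]]] ?]; [constructor 1|constructor 2|constructor 3];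
  apply/val_inj.
Qed.

Lemma offdiag_rank_one_factor {F : fieldType} (r : 'I_3 -> 'I_3 -> F) :
  (forall i k, i != k -> r i k != 0) ->
  r u1 u2 * r u2 u3 * r u3 u1 = r u1 u3 * r u3 u2 * r u2 u1 ->
  exists x y : 'I_3 -> F, [/\ forall i, x i != 0, forall k, y k != 0
    & forall i k, i != k -> x i * y k = r i k].
Proof.
move=> rnz cycle.
(* Normalize y_1 = 1; five of the six equations then determine x and y, and
   the sixth, x_1 y_3 = r_13, is the cycle condition. *)
pose x i := [:: r u1 u2 * r u3 u1 / r u3 u2; r u2 u1; r u3 u1]`_i.
pose y k := [:: 1; r u3 u2 / r u3 u1; r u2 u3 / r u2 u1]`_k.
exists x, y; split.
- by move=> i; case: (ord3_cases i) => ->; rewrite /x /= ?mulf_neq0 ?invr_eq0 ?rnz.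
- by move=> k; case: (ord3_cases k) => ->; rewrite /y /= ?oner_eq0 ?mulf_neq0 ?invr_eq0 ?rnz.
move=> i k; case: (ord3_cases i) => ->; case: (ord3_cases k) => -> //= _;
  rewrite /x /y /=; try by field; rewrite ?rnz.
transitivity (r u1 u2 * r u2 u3 * r u3 u1 / (r u3 u2 * r u2 u1)).
  by field; rewrite ?rnz.
by rewrite cycle; field; rewrite ?rnz.
Qed.

Lemma adjmx_diag_form (C : numClosedFieldType) (d : 'rV[C]_2) (x y : C) :
  adjmx (\col_(l < 2) (if l == ord0 then 1 else Num.conj x)) *m diag_mx d
    *m (\col_(l < 2) (if l == ord0 then 1 else y))
  = (d ord0 sc1 + x * y * d ord0 sc2)%:M.
Proof.
rewrite mul_mx_diag; apply/matrixP => a b.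
rewrite [a]ord1 [b]ord1 !mxE big_ord_recr big_ord_recr big_ord0 !mxE /= conjCK conjC1.
have -> : widen_ord (leqnSn 1) ord_max = sc1 by apply/val_inj.
have -> : ord_max = sc2 by apply/val_inj.
by rewrite add0r mul1r mulr1 mulrAC.
Qed.

Lemma interference_nulling_factor {F : fieldType} (h : 'I_3 -> 'I_3 -> 'I_2 -> F) :
  (forall i k l, i != k -> h i k l != 0) ->
  (h u1 u2 sc2 / h u1 u2 sc1) * (h u1 u3 sc1 / h u1 u3 sc2)
    * (h u2 u3 sc2 / h u2 u3 sc1) * (h u2 u1 sc1 / h u2 u1 sc2)
    * (h u3 u1 sc2 / h u3 u1 sc1) * (h u3 u2 sc1 / h u3 u2 sc2) = 1 ->
  exists x y : 'I_3 -> F, [/\ forall i, x i != 0, forall k, y k != 0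
    & forall i k, i != k -> h i k sc1 + x i * y k * h i k sc2 = 0].
Proof.
move=> hnz hcond; pose r i k : F := - h i k sc1 / h i k sc2.
have rnz i k : i != k -> r i k != 0.
  by move=> ik; rewrite mulf_neq0 ?oppr_eq0 ?invr_eq0 ?hnz.
have cycle : r u1 u2 * r u2 u3 * r u3 u1 = r u1 u3 * r u3 u2 * r u2 u1.
  by rewrite -[LHS]mulr1 -hcond /r; field; rewrite ?hnz.
have [x [y [xnz ynz xyE]]] := offdiag_rank_one_factor r rnz cycle.
exists x, y; split=> // i k ik.
by rewrite xyE // /r !mulNr divfK ?hnz // subrr.
Qed.

Theorem theorem1 (R : realType) (h : 'I_3 -> 'I_3 -> 'I_2 -> R[i])
  (hnz : forall i k l, i != k -> h i k l != 0)
  (hcond : (h u1 u2 sc2 / h u1 u2 sc1) * (h u1 u3 sc1 / h u1 u3 sc2)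
         * (h u2 u3 sc2 / h u2 u3 sc1) * (h u2 u1 sc1 / h u2 u1 sc2)
         * (h u3 u1 sc2 / h u3 u1 sc1) * (h u3 u2 sc1 / h u3 u2 sc2) = 1) :
  exists (u v : 'I_3 -> 'cV[R[i]]_2),
    (forall i l, u i l ord0 != 0) /\ (forall k l, v k l ord0 != 0) /\
    (forall i k, i != k -> adjmx (u i) *m chanmx h i k *m v k = 0).
Proof.
have [x [y [xnz ynz nullE]]] := interference_nulling_factor h hnz hcond.
exists (fun i => \col_(l < 2) (if l == ord0 then 1 else Num.conj (x i))).
exists (fun k => \col_(l < 2) (if l == ord0 then 1 else y k)).
split; first by move=> i l; rewrite mxE; case: ifP; rewrite ?oner_eq0 ?conjC_eq0.
split; first by move=> k l; rewrite mxE; case: ifP; rewrite ?oner_eq0.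
move=> i k ik; rewrite /chanmx adjmx_diag_form !mxE nullE //.
by apply/matrixP => a b; rewrite !mxE mul0rn.
Qed.
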